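(* Let $X=\mathrm{tv}(b_0,\dots,b_l)$ be a smooth complete toric surface with $b_0<0$ and $l>2$, with rays $\rho_0,\dots,\rho_l$ as below. Let $\alpha$ be the unique index with $1<\alpha<l$ such that $\rho_\alpha=-\rho_0$ (equivalently, the continued fraction $[b_1,\dots,b_{\alpha-1}]$ is well defined and equals $0$), and put $\gamma=\sum_{i=1}^{\alpha-1}(3-b_i)-3$. Then $\gamma\ge0$, $b_0+b_\alpha-\gamma\ge0$, and for every $R\in(\mathbb Z^2)^*$ with $\langle\rho_\alpha,R\rangle=1$ one has $\langle\rho_{\alpha-1},R\rangle-\langle\rho_1,R\rangle=\gamma$.
   Context: For integers $b_0,\dots,b_l$, $\mathrm{tv}(b_0,\dots,b_l)$ denotes the smooth complete toric surface whose fan in $\mathbb Z^2\otimes\mathbb Q$ has rays with primitive generators $\rho_0,\dots,\rho_l$ in cyclic order (indices mod $l+1$), satisfying $b_i\rho_i=\rho_{i-1}+\rho_{i+1}$; equivalently, $-b_i$ is the self-intersection number of the invariant prime divisor corresponding to $\rho_i$. The continued fraction is defined by $[c_k]=c_k$ and $[c_1,\dots,c_k]=c_1-1/[c_2,\dots,c_k]$ when no division by zero occurs. *)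

From HB Require Import structures.
From mathcomp Require Import all_boot all_order all_algebra.
Set Implicit Arguments. Unset Strict Implicit. Unset Printing Implicit Defensive.
Import Order.TTheory GRing.Theory Num.Theory.
Local Open Scope ring_scope.

(* vectors of Z^2 and of its dual (Z^2)^* *)
Definition vec2 := (int * int)%type.

Definition det2 (u v : vec2) : int := u.1 * v.2 - u.2 * v.1.

Definition pair2 (v R : vec2) : int := v.1 * R.1 + v.2 * R.2.

Definition vadd (u v : vec2) : vec2 := (u.1 + v.1, u.2 + v.2).
Definition vscale (c : int) (u : vec2) : vec2 := (c * u.1, c * u.2).
Definition vopp (u : vec2) : vec2 := (- u.1, - u.2).

Definition cyc (l i : nat) : nat := (i %% l.+1)%N.

(* [is_tv l b rho]: the vectors rho 0, ..., rho l are the primitive ray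
   generators, in counterclockwise cyclic order, of a smooth complete fan
   in Z^2 (the fan of tv(b_0,...,b_l)), i.e.
   - consecutive rays form a positively oriented lattice basis
     (smoothness; implies primitivity), indices mod l+1;
   - the 2-dimensional cones cone(rho_i, rho_{i+1}) cover Z^2 (completeness)
     and have pairwise disjoint interiors (so they form a fan);
   - b_i rho_i = rho_{i-1} + rho_{i+1} for 0 <= i <= l (indices mod l+1). *)
Definition is_tv (l : nat) (b : nat -> int) (rho : nat -> vec2) : Prop :=
  let r := fun i => rho (cyc l i) in
  [/\ (forall i : nat, det2 (r i) (r i.+1) = 1),
      (forall v : vec2, exists i : nat,
          [/\ (i < l.+1)%N, 0 <= det2 v (r i.+1) & 0 <= det2 (r i) v]),
      (forall (v : vec2) (i j : nat), (i < l.+1)%N -> (j < l.+1)%N ->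
          0 < det2 v (r i.+1) -> 0 < det2 (r i) v ->
          0 < det2 v (r j.+1) -> 0 < det2 (r j) v -> i = j)
    & (forall i : nat, (i < l.+1)%N ->
          vscale (b i) (r i) = vadd (r (i + l)%N) (r i.+1))].

Definition gamma_of (b : nat -> int) (alpha : nat) : int :=
  \sum_(1 <= i < alpha) (3 - b i) - 3.

From HB Require Import structures.
From mathcomp Require Import all_boot all_order all_algebra.
From mathcomp Require Import zify ring.
Import Order.TTheory GRing.Theory Num.Theory.
Set Implicit Arguments. Unset Strict Implicit. Unset Printing Implicit Defensive.
Local Open Scope ring_scope.

(* If u_0, ..., u_n is a unimodular chain with u_n = -u_0 and
      u_1, ..., u_{n-1} in the open upper half-plane of u_0, and c_i u_i =
      u_{i-1} + u_{i+1}, then sum_{0<i<n} (3 - c_i) = 3 + det(u_1, u_{n-1}).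
      By induction on n: some c_j equals 1 (the heights det(u_0, u_i) vanish at
      both ends, so they cannot be convex), and deleting u_j (a blow-down)
      gives a shorter half turn with the same value of the sum minus
      det(u_1, u_{n-1}).
   3. Fans.  No ray of a smooth complete fan lies strictly inside a cone, and
      rays with distinct indices are distinct.  With b_0 < 0 and l > 2 this
      forces -rho_0 = rho_alpha with 1 < alpha < l; rho_0, ..., rho_alpha is a
      half turn, whence gamma = det(rho_1, rho_{alpha-1}), and the three claims
      follow by placing rho_{alpha-1} and rho_{alpha+1} with respect to the
      cones (rho_0, rho_1) and (rho_l, rho_0). *)

Lemma det2C u v : det2 u v = - det2 v u.
Proof. by case: u v => [u1 u2] [v1 v2]; rewrite /det2 /=; ring. Qed.

Lemma det2vv u : det2 u u = 0.
Proof. by case: u => [u1 u2]; rewrite /det2 /=; ring. Qed.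

Lemma det2Dl u v w : det2 (vadd u v) w = det2 u w + det2 v w.
Proof. by case: u v w => [u1 u2] [v1 v2] [w1 w2]; rewrite /det2 /=; ring. Qed.

Lemma det2Dr u v w : det2 w (vadd u v) = det2 w u + det2 w v.
Proof. by case: u v w => [u1 u2] [v1 v2] [w1 w2]; rewrite /det2 /=; ring. Qed.

Lemma det2Zl c u w : det2 (vscale c u) w = c * det2 u w.
Proof. by case: u w => [u1 u2] [w1 w2]; rewrite /det2 /=; ring. Qed.

Lemma det2Zr c u w : det2 w (vscale c u) = c * det2 w u.
Proof. by case: u w => [u1 u2] [w1 w2]; rewrite /det2 /=; ring. Qed.

Lemma det2Nl u w : det2 (vopp u) w = - det2 u w.
Proof. by case: u w => [u1 u2] [w1 w2]; rewrite /det2 /=; ring. Qed.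

Lemma det2Nr u w : det2 w (vopp u) = - det2 w u.
Proof. by case: u w => [u1 u2] [w1 w2]; rewrite /det2 /=; ring. Qed.

Lemma vscale1 u : vscale 1 u = u.
Proof. by case: u => [u1 u2]; rewrite /vscale !mul1r. Qed.

Lemma coord_decomp r0 r1 v : det2 r0 r1 = 1 ->
  v = vadd (vscale (det2 v r1) r0) (vscale (det2 r0 v) r1).
Proof.
case: r0 r1 v => [a1 a2] [s1 s2] [v1 v2] h; rewrite /vadd /vscale /=.
by congr (_, _); rewrite -[LHS]mulr1 -h /det2 /=; ring.
Qed.

Lemma coord_inj r0 r1 u v : det2 r0 r1 = 1 ->
  det2 u r1 = det2 v r1 -> det2 r0 u = det2 r0 v -> u = v.
Proof.
by move=> h eX eY; rewrite (coord_decomp u h) (coord_decomp v h) eX eY.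
Qed.

Lemma det2_coords r0 r1 u v : det2 r0 r1 = 1 ->
  det2 u v = det2 u r1 * det2 r0 v - det2 r0 u * det2 v r1.
Proof.
move=> h; rewrite {1}(coord_decomp u h) {1}(coord_decomp v h).
by rewrite !(det2Dl, det2Dr, det2Zl, det2Zr) !det2vv (det2C r1 r0) h; ring.
Qed.

Lemma pair2N v R : pair2 (vopp v) R = - pair2 v R.
Proof. by case: v R => [v1 v2] [R1 R2]; rewrite /pair2 /=; ring. Qed.

Lemma pair2_coords r0 r1 v R : det2 r0 r1 = 1 ->
  pair2 v R = det2 v r1 * pair2 r0 R + det2 r0 v * pair2 r1 R.
Proof.
move=> h; rewrite {1}(coord_decomp v h).
by case: r0 r1 R {h} => [a1 a2] [s1 s2] [R1 R2]; rewrite /pair2 /=; ring.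
Qed.

Lemma three_term a b c : det2 a b = 1 -> det2 b c = 1 ->
  vscale (det2 a c) b = vadd a c.
Proof.
move=> hab hbc; rewrite [in vadd a c](coord_decomp c hab) (det2C c b) hbc.
by case: a b {hab hbc} => [a1 a2] [b1 b2]; rewrite /vadd /vscale /=; congr (_, _); ring.
Qed.

Lemma relation_coeff c v p s : vscale c v = vadd p s -> det2 p v = 1 -> c = det2 p s.
Proof.
move=> e hpv; have := congr1 (det2 p) e.
by rewrite det2Zr det2Dr det2vv hpv mulr1 add0r.
Qed.

Lemma mulz_nonneg_eq1 (a c : int) : 0 <= a -> a * c = 1 -> a = 1 /\ c = 1.
Proof.
move=> a0 ac; have [c0|c1] : c <= 0 \/ 1 <= c by lia.
  nia.
have : 0 <= (a - 1) * (c - 1) by apply: mulr_ge0; nia.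
nia.
Qed.

(* The integer constraints describing a cone that contains -rho_0 in its
   interior (see antipode_not_interior) have a unique solution. *)
Lemma interior_coords (xi yi xk yk c : int) : c < 0 -> xi <= 0 -> 0 < yi -> yk < 0 ->
  xk + c * yk <= 0 -> xi * yk - yi * xk = 1 ->
  [/\ xi = 0, yi = 1, xk = -1, yk = -1 & c = -1].
Proof.
move=> c0 xi0 yi0 yk0 hk e.
have cyk : 1 <= c * yk by nia.
have xiyk : 0 <= xi * yk by nia.
have h1 : 0 <= (yi - 1) * (- xk - 1) by apply: mulr_ge0; lia.
have h2 : 0 <= (- c - 1) * (- yk - 1) by apply: mulr_ge0; lia.
have [-> ->] : yi = 1 /\ xk = -1 by nia.
have [-> ->] : c = -1 /\ yk = -1 by nia.
by split => //; nia.
Qed.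

Lemma on_axis_antipode r0 r1 p s : det2 r0 r1 = 1 -> det2 p s = 1 ->
  det2 r0 s = 0 -> 0 <= det2 r0 p -> s = vopp r0.
Proof.
move=> h hps hs hp.
have [Yp1 Xs] : det2 r0 p = 1 /\ - det2 s r1 = 1.
  apply: mulz_nonneg_eq1 => //.
  by rewrite -hps (det2_coords p s h) hs; ring.
apply: (coord_inj h); rewrite ?det2Nl ?det2Nr ?det2vv ?hs; lia.
Qed.

(* A sequence positive inside [0, n] and vanishing at both ends, with
   c_i y_i = y_{i-1} + y_{i+1}, has some c_j = 1: otherwise every c_i >= 2 and
   the increments y_k - y_{k-1} would stay >= 1 up to k = n. *)
Lemma unit_coefficient (y c : nat -> int) (n : nat) : (2 < n)%N ->
  y 0%N = 0 -> y n = 0 -> (forall i, (0 < i < n)%N -> 0 < y i) ->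
  (forall i, (0 < i < n)%N -> c i * y i = y i.-1 + y i.+1) ->
  exists2 j, (0 < j < n)%N & c j = 1.
Proof.
move=> n2 y0 yn ypos rec.
have ynn i : (i <= n)%N -> 0 <= y i.
  move=> hi; have [->|[->|hi']] : i = 0%N \/ i = n \/ (0 < i < n)%N by lia.
  - by rewrite y0.
  - by rewrite yn.
  - exact/ltW/ypos.
have [/hasP[j]|/hasPn noj] := boolP (has (fun j => c j == 1) (iota 1 n.-1)).
  by rewrite mem_iota => hj /eqP cj; exists j => //; lia.
have slope k : (0 < k <= n)%N -> 1 <= y k - y k.-1.
  elim: k => [//|k IH] hk.
  case: k IH hk => [|k] IH hk; first by have := ypos 1%N; rewrite y0 /=; lia.
  have hk1 : (0 < k.+1 < n)%N by lia.
  have ck : c k.+1 != 1 by apply: noj; rewrite mem_iota; lia.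
  have nb : 0 < y k + y k.+2.
    have [k0|k0] : k = 0%N \/ (0 < k)%N by lia.
      by subst k; rewrite y0 add0r; apply: ypos; lia.
    by have := ypos k (ltac:(lia)); have := ynn k.+2 (ltac:(lia)); lia.
  have := rec _ hk1; have := IH (ltac:(lia)); have := ypos _ hk1; rewrite /=.
  have [c0|c2] : c k.+1 <= 0 \/ 2 <= c k.+1 by lia.
    by nia.
  by nia.
by have := slope n (ltac:(lia)); have := ypos n.-1 (ltac:(lia)); rewrite yn; lia.
Qed.

(* The self-intersection coefficient c_i of u_i, i.e. c_i u_i = u_{i-1} + u_{i+1}
   in a unimodular chain. *)
Definition cdet (u : nat -> vec2) (i : nat) : int := det2 (u i.-1) (u i.+1).

Definition half_turn (u : nat -> vec2) (n : nat) : Prop :=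
  [/\ forall i, (i < n)%N -> det2 (u i) (u i.+1) = 1,
      u n = vopp (u 0%N)
    & forall i, (0 < i < n)%N -> 0 < det2 (u 0%N) (u i)].

Lemma half_turn_rel u n i : half_turn u n -> (0 < i < n)%N ->
  vscale (cdet u i) (u i) = vadd (u i.-1) (u i.+1).
Proof.
case=> hdet _ _ hi; apply: three_term; last by apply: hdet; lia.
by have := hdet i.-1 (ltac:(lia)); rewrite prednK //; lia.
Qed.

Lemma half_turn_unit u n : (2 < n)%N -> half_turn u n ->
  exists2 j, (0 < j < n)%N & cdet u j = 1.
Proof.
move=> n2 hu; have [_ hend hpos] := hu.
apply: (@unit_coefficient (fun i => det2 (u 0%N) (u i))) => //.
- by rewrite det2vv.
- by rewrite hend det2Nr det2vv oppr0.
- move=> i hi; have := congr1 (det2 (u 0%N)) (half_turn_rel hu hi).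
  by rewrite det2Zr det2Dr.
Qed.

Definition skip (j : nat) (u : nat -> vec2) (k : nat) : vec2 :=
  if (k < j)%N then u k else u k.+1.

Section BlowDown.
Variables (u : nat -> vec2) (n j : nat).
Hypotheses (hu : half_turn u n.+1) (hj : (0 < j <= n)%N) (hcj : cdet u j = 1).

Lemma blowdown_split : u j = vadd (u j.-1) (u j.+1).
Proof. by rewrite -(half_turn_rel hu) ?hcj ?vscale1 //; lia. Qed.

Lemma half_turn_skip : half_turn (skip j u) n.
Proof.
have [hdet hend hpos] := hu; have /andP[j0 jn] := hj; split.
- move=> i hi; rewrite /skip.
  have [lt|[ej|gt]] : (i.+1 < j)%N \/ i.+1 = j \/ (j <= i)%N by lia.
  + by rewrite lt ltnW //; apply: hdet; lia.
  + by rewrite -ej ltnSn ltnn -hcj /cdet -ej.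
  + by rewrite ltnNge gt ltnNge (leqW gt) /=; apply: hdet; lia.
- by rewrite /skip ltnNge jn j0.
- move=> i hi; rewrite /skip j0.
  by case: ifP => _; apply: hpos; lia.
Qed.

(* The coefficients of the two neighbours of u_j drop by 1, which changes
   the sum of the 3 - c_i on each side of j; the boundary vectors u_1 and
   u_{n-1} change only when j is next to an end. *)
Lemma skip_sum_left :
  \sum_(1 <= i < j) (3 - cdet (skip j u) i)
  = \sum_(1 <= i < j) (3 - cdet u i) + (if (1 < j)%N then 1 else 0).
Proof.
have [hdet _ _] := hu; have split := blowdown_split.
case: ltnP => j1; last by rewrite !big_geq ?addr0.
have [k ek] : exists k, j = k.+2 by exists j.-2; lia.
rewrite ek in split *; rewrite (big_nat_recr k.+1) // (big_nat_recr k.+1) //=.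
rewrite (eq_big_nat _ _ (F2 := fun i => 3 - cdet u i)) => [|i hi]; last first.
  by rewrite /cdet /skip !ifT //; lia.
rewrite /cdet /skip /= ltnn ifT; last lia.
by rewrite split det2Dr hdet; [ring | lia].
Qed.

Lemma skip_sum_right :
  \sum_(j <= i < n) (3 - cdet (skip j u) i)
  = \sum_(j.+1 <= i < n.+1) (3 - cdet u i) + (if (j < n)%N then 1 else 0).
Proof.
have [hdet _ _] := hu; have /andP[j0 jn] := hj.
have [jn'|jn'] := ltnP j n; last first.
  by rewrite !big_geq ?addr0 //; lia.
rewrite big_ltn // [in RHS]big_ltn // [in RHS]big_add1 /=.
rewrite (eq_big_nat _ _ (F2 := fun i => 3 - cdet u i.+1)) => [|i hi]; last first.
  rewrite /cdet /skip !ifN; try lia.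
  by rewrite prednK //; lia.
rewrite /cdet /skip ifT ?ifN /=; try lia.
by rewrite [u j]blowdown_split det2Dl hdet; [ring | lia].
Qed.

Lemma skip_boundary : (1 < n)%N ->
  det2 (skip j u 1) (skip j u n.-1)
  = det2 (u 1) (u n) - (if (1 < j)%N then 0 else 1) - (if (j < n)%N then 0 else 1).
Proof.
move=> n1; have [hdet hend _] := hu; have /andP[j0 jn] := hj.
have split := blowdown_split.
have -> : skip j u n.-1 = if (j < n)%N then u n else u n.-1.
  by rewrite /skip; case: ifP => a; case: ifP => c;
    rewrite ?prednK //; first [lia | exfalso; lia].
rewrite /skip; case: ifP => j1; case: ifP => jn1; try (exfalso; lia).
- by ring.
- have ej : j = n by lia.
  rewrite ej in split; rewrite [u n]split det2Dr hend det2Nr.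
  by rewrite (det2C (u 1%N) (u 0%N)) hdet //; ring.
- have ej : j = 1%N by lia.
  rewrite ej /= in split; rewrite split det2Dl.
  have := hdet n (ltnSn n); rewrite hend det2Nr (det2C (u n)) opprK => ->.
  by ring.
Qed.

Lemma blowdown_defect : (1 < n)%N ->
  \sum_(1 <= i < n) (3 - cdet (skip j u) i) - det2 (skip j u 1) (skip j u n.-1)
  = \sum_(1 <= i < n.+1) (3 - cdet u i) - det2 (u 1) (u n).
Proof.
move=> n1; have /andP[j0 jn] := hj.
rewrite (big_cat_nat _ (n := j)) // [in RHS](big_cat_nat _ (n := j)) //; try lia.
rewrite [in RHS](big_ltn (m := j)) //; try lia.
rewrite /= skip_sum_left skip_sum_right skip_boundary // hcj.
by case: ifP => _; case: ifP => _; ring.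
Qed.

End BlowDown.

Theorem half_turn_sum n u : (1 < n)%N -> half_turn u n ->
  \sum_(1 <= i < n) (3 - cdet u i) = 3 + det2 (u 1%N) (u n.-1).
Proof.
elim: n u => [//|n IH] u n1 hu.
have [n_eq1|n2] : n = 1%N \/ (1 < n)%N by lia.
  have [_ hend _] := hu; rewrite n_eq1 in hend *.
  by rewrite big_nat1 /cdet /= hend det2Nr !det2vv; ring.
have [j hj hcj] := half_turn_unit (ltac:(lia) : (2 < n.+1)%N) hu.
have hj' : (0 < j <= n)%N by lia.
have := blowdown_defect hu hj' hcj n2.
rewrite IH //=; last exact: half_turn_skip hu hj' hcj.
by rewrite addrK => /esym/eqP; rewrite subr_eq => /eqP.
Qed.

Lemma cyc_id l i : (i <= l)%N -> cyc l i = i.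
Proof. by move=> hi; rewrite /cyc modn_small. Qed.

Lemma cyc_last l : cyc l l.+1 = 0%N.
Proof. exact: modnn. Qed.

Lemma cyc_pred l i : (0 < i <= l)%N -> cyc l (i + l) = i.-1.
Proof.
move=> /andP[i0 il]; rewrite /cyc -{1}(prednK i0) addSnnS modnDr modn_small //; lia.
Qed.

Section SmoothCompleteFan.
Variables (l : nat) (b : nat -> int) (rho : nat -> vec2).
Hypothesis tv : is_tv l b rho.

Lemma fan_det i : (i < l)%N -> det2 (rho i) (rho i.+1) = 1.
Proof. by move=> hi; case: tv => + _ _ _ => /(_ i); rewrite !cyc_id //; lia. Qed.

Lemma fan_det_last : det2 (rho l) (rho 0%N) = 1.
Proof. by case: tv => + _ _ _ => /(_ l); rewrite cyc_last cyc_id. Qed.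

Lemma fan_rel i : (0 < i < l)%N -> vscale (b i) (rho i) = vadd (rho i.-1) (rho i.+1).
Proof.
move=> hi; case: tv => _ _ _ /(_ i (ltac:(lia))).
by rewrite cyc_pred ?cyc_id //; lia.
Qed.

Lemma fan_rel0 : (0 < l)%N -> vscale (b 0%N) (rho 0%N) = vadd (rho l) (rho 1%N).
Proof. by move=> l0; case: tv => _ _ _ /(_ 0%N isT); rewrite add0n !cyc_id. Qed.

(* Otherwise N rho_k + rho_{k+1}
   with N large lies in the interiors of the cones j and k, forcing j = k. *)
Lemma fan_ray_outside j k : (j <= l)%N -> (k <= l)%N ->
  0 < det2 (rho j) (rho k) -> det2 (rho k) (rho (cyc l j.+1)) <= 0.
Proof.
move=> hj hk hC; rewrite leNgt; apply/negP => hA.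
case: tv => H1 _ H3 _.
set s := rho (cyc l j.+1) in hA *; set t := rho (cyc l k.+1).
have hkt : det2 (rho k) t = 1 by have := H1 k; rewrite cyc_id.
pose N := 1 + `|det2 t s| + `|det2 (rho j) t|.
have := H3 (vadd (vscale N (rho k)) t) k j (ltac:(lia)) (ltac:(lia)).
rewrite (cyc_id hk) (cyc_id hj) -/s -/t !(det2Dl, det2Dr, det2Zl, det2Zr) !det2vv hkt.
have jk : k <> j by move=> ekj; move: hC; rewrite ekj det2vv ltxx.
have N1 : 1 <= N by rewrite /N; lia.
move=> H; apply: jk; apply: H; rewrite ?mulr0 ?add0r ?mulr1 ?addr0; try lia.
- have : 0 <= (N - 1) * (det2 (rho k) s - 1) by apply: mulr_ge0; lia.
  rewrite /N; nia.
- have : 0 <= (N - 1) * (det2 (rho j) (rho k) - 1) by apply: mulr_ge0; lia.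
  rewrite /N; nia.
Qed.

(* Distinct indices give distinct rays, by the same disjointness argument. *)
Lemma fan_ray_inj j k : (j <= l)%N -> (k <= l)%N -> rho j = rho k -> j = k.
Proof.
move=> hj hk ejk; case: tv => H1 _ H3 _.
set s := rho (cyc l j.+1); set t := rho (cyc l k.+1).
have hjs : det2 (rho j) s = 1 by have := H1 j; rewrite cyc_id.
have hjt : det2 (rho j) t = 1 by have := H1 k; rewrite cyc_id // -ejk.
pose M := 1 + `|det2 s t|.
apply: (H3 (vadd (vadd (vscale M (rho j)) s) t));
  rewrite ?(cyc_id hj) ?(cyc_id hk) -/s -/t -?ejk; try lia;
  by rewrite !(det2Dl, det2Dr, det2Zl, det2Zr) ?det2vv ?hjs ?hjt ?(det2C t s) /M; lia.
Qed.
End SmoothCompleteFan.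

Section HalfPlane.
Variables (l : nat) (b : nat -> int) (rho : nat -> vec2).
Hypotheses (tv : is_tv l b rho) (hl : (2 < l)%N).

Lemma fan_basis : det2 (rho 0%N) (rho 1%N) = 1.
Proof. by apply: (fan_det tv); lia. Qed.

Lemma fan_next i : (i <= l)%N ->
  (cyc l i.+1 <= l)%N /\ det2 (rho i) (rho (cyc l i.+1)) = 1.
Proof.
move=> hi; split; first by rewrite -ltnS /cyc ltn_pmod.
by case: tv => /(_ i) + _ _ _; rewrite cyc_id.
Qed.

(* rho_l = b_0 rho_0 - rho_1, in coordinates. *)
Lemma det_rho_last w : det2 (rho l) w = b 0%N * det2 (rho 0%N) w - det2 (rho 1%N) w.
Proof.
have := congr1 (fun x => det2 x w) (fan_rel0 tv (ltac:(lia) : (0 < l)%N)).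
by rewrite /= det2Zl det2Dl => ->; ring.
Qed.

Lemma antipode_index k : (k <= l)%N -> rho k = vopp (rho 0%N) -> (1 < k < l)%N.
Proof.
move=> hk ek; have e01 := fan_basis; have el0 := fan_det_last tv.
have [k0|[k1|[kl|//]]] : k = 0%N \/ k = 1%N \/ k = l \/ (1 < k < l)%N by lia.
- by subst k; move: (e01); rewrite {1}ek det2Nl e01; lia.
- by subst k; move: e01; rewrite ek det2Nr det2vv; lia.
- by subst k; move: el0; rewrite ek det2Nl det2vv; lia.
Qed.

(* With b_0 < 0 and l > 2, -rho_0 does not lie in the interior of a cone:
   the only possibility allowed by the cones (rho_0, rho_1) and (rho_l, rho_0)
   is the cone (rho_1, rho_l), i.e. l = 2. *)
Lemma antipode_not_interior i : b 0%N < 0 -> (i <= l)%N ->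
  0 < det2 (rho 0%N) (rho i) -> det2 (rho 0%N) (rho (cyc l i.+1)) < 0 -> False.
Proof.
move=> hb0 hi Yi Yk; have e01 := fan_basis.
have [hk hik] := fan_next hi; move eqk : (cyc l i.+1) hk hik Yk => k hk hik Yk.
have Xi : det2 (rho i) (rho 1%N) <= 0.
  by have := fan_ray_outside tv (leq0n l) hi Yi; rewrite cyc_id //; lia.
have Xk : det2 (rho k) (rho 1%N) + b 0%N * det2 (rho 0%N) (rho k) <= 0.
  have := fan_ray_outside tv (leqnn l) hk.
  by rewrite cyc_last det_rho_last (det2C (rho k) (rho 0%N)) (det2C (rho 1%N) (rho k)); lia.
have hik' := etrans (esym (det2_coords _ _ e01)) hik.
have [Xi0 Yi1 Xk1 Yk1 b01] := interior_coords hb0 Xi Yi Yk Xk hik'.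
have ei : i = 1%N.
  apply: (fan_ray_inj tv) => //; first lia.
  by apply: (coord_inj e01); rewrite ?Xi0 ?Yi1 ?det2vv ?e01.
have ekl : k = l.
  apply: (fan_ray_inj tv) => //.
  apply: (coord_inj e01); rewrite ?Xk1 ?Yk1.
  - by rewrite det_rho_last e01 det2vv b01; ring.
  - by rewrite det2C det_rho_last det2vv (det2C (rho 1%N)) e01; ring.
by move: eqk; rewrite ei ekl /cyc modn_small; lia.
Qed.

(* By completeness -rho_0 lies in some cone, hence on one of its rays. *)
Lemma antipode_exists : b 0%N < 0 ->
  exists alpha, [/\ (1 < alpha)%N, (alpha < l)%N & rho alpha = vopp (rho 0%N)].
Proof.
move=> hb0; have e01 := fan_basis.
have pick k : (k <= l)%N -> rho k = vopp (rho 0%N) ->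
    exists alpha, [/\ (1 < alpha)%N, (alpha < l)%N & rho alpha = vopp (rho 0%N)].
  by move=> hk ek; exists k; have /andP[] := antipode_index hk ek.
have [_ cover _ _] := tv.
have [i [il hA hC]] := cover (vopp (rho 0%N)).
have hi : (i <= l)%N by lia.
rewrite cyc_id // det2Nr det2C opprK in hC; rewrite det2Nl in hA.
have [hk hik] := fan_next hi.
have [Yk0|Yk] := eqVneq (det2 (rho 0%N) (rho (cyc l i.+1))) 0.
  exact: pick hk (on_axis_antipode e01 hik Yk0 hC).
have [Yi0|Yi] := eqVneq (det2 (rho 0%N) (rho i)) 0.
  apply: pick hi (on_axis_antipode (p := vopp (rho (cyc l i.+1))) e01 _ Yi0 _).
    by rewrite det2Nl det2C opprK.
  by rewrite det2Nr.
by exfalso; apply: (antipode_not_interior hb0 hi); lia.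
Qed.

Section Antipode.
Variable alpha : nat.
Hypotheses (ha1 : (1 < alpha)%N) (hal : (alpha < l)%N) (ha : rho alpha = vopp (rho 0%N)).

(* The rays between rho_0 and rho_alpha = -rho_0 lie in the open upper
   half-plane: leaving it earlier would put rho_alpha inside a cone or give a
   second index for -rho_0. *)
Lemma upper_half i : (0 < i < alpha)%N -> 0 < det2 (rho 0%N) (rho i).
Proof.
elim: i => [//|i IH] hi.
have [i0|i0] : i = 0%N \/ (0 < i)%N by lia.
  by rewrite i0 fan_basis.
have Yi := IH (ltac:(lia)).
have hdet : det2 (rho i) (rho i.+1) = 1 by apply: (fan_det tv); lia.
rewrite ltNge; apply/negP => Yle.
have [Y0|Ylt] : det2 (rho 0%N) (rho i.+1) = 0 \/ det2 (rho 0%N) (rho i.+1) < 0 by lia.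
  have := on_axis_antipode fan_basis hdet Y0 (ltW Yi).
  by rewrite -ha => /(fan_ray_inj tv); lia.
have hia : 0 < det2 (rho i) (rho alpha) by rewrite ha det2Nr det2C opprK.
have := fan_ray_outside tv (ltac:(lia) : (i <= l)%N) (ltac:(lia) : (alpha <= l)%N) hia.
by rewrite cyc_id ?ha ?det2Nl; lia.
Qed.

Lemma half_turn_fan : half_turn rho alpha.
Proof.
split => [i hi | // | i hi]; last exact: upper_half.
by apply: (fan_det tv); lia.
Qed.

Lemma gamma_det : gamma_of b alpha = det2 (rho 1%N) (rho alpha.-1).
Proof.
rewrite /gamma_of (eq_big_nat _ _ (F2 := fun i => 3 - cdet rho i)) => [|i hi]; last first.
  congr (_ - _); apply: (relation_coeff (fan_rel tv (ltac:(lia) : (0 < i < l)%N))).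
  by have := fan_det tv (ltac:(lia) : (i.-1 < l)%N); rewrite prednK //; lia.
by rewrite half_turn_sum //; [ring | exact: half_turn_fan].
Qed.

(* rho_{alpha-1} is not inside the cone (rho_0, rho_1). *)
Lemma gamma_nonneg : 0 <= gamma_of b alpha.
Proof.
have Y : 0 < det2 (rho 0%N) (rho alpha.-1) by apply: upper_half; lia.
have := fan_ray_outside tv (leq0n l) (ltac:(lia) : (alpha.-1 <= l)%N) Y.
by rewrite gamma_det cyc_id ?(det2C (rho alpha.-1)); lia.
Qed.

Lemma height_before_antipode : det2 (rho 0%N) (rho alpha.-1) = 1.
Proof.
have := fan_det tv (ltac:(lia) : (alpha.-1 < l)%N).
by rewrite prednK ?ha ?det2Nr -?det2C //; lia.
Qed.

(* rho_{alpha+1} = b_alpha rho_alpha - rho_{alpha-1} is not inside the cone (rho_l, rho_0);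
   its coordinates are (gamma - b_alpha, -1). *)
Lemma gamma_bound : 0 <= b 0%N + b alpha - gamma_of b alpha.
Proof.
have rel := fan_rel tv (ltac:(lia) : (0 < alpha < l)%N).
have next w : det2 (rho alpha.+1) w = b alpha * det2 (rho alpha) w - det2 (rho alpha.-1) w.
  by have := congr1 (fun x => det2 x w) rel; rewrite /= det2Zl det2Dl => ->; ring.
have h0 : det2 (rho alpha.+1) (rho 0%N) = 1.
  by rewrite next ha det2Nl det2vv (det2C (rho alpha.-1)) height_before_antipode; ring.
have h1 : det2 (rho alpha.+1) (rho 1%N) = gamma_of b alpha - b alpha.
  by rewrite next ha det2Nl fan_basis (det2C (rho alpha.-1)) gamma_det; ring.
have := fan_ray_outside tv (leqnn l) (ltac:(lia) : (alpha.+1 <= l)%N).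
by rewrite cyc_last det_rho_last (det2C (rho 0%N)) (det2C (rho 1%N)) h0 h1; lia.
Qed.

(* Pairing rho_{alpha-1} = -gamma rho_0 + rho_1 with R, where <rho_0, R> = -1. *)
Lemma gamma_pairing R : pair2 (rho alpha) R = 1 ->
  pair2 (rho alpha.-1) R - pair2 (rho 1%N) R = gamma_of b alpha.
Proof.
rewrite ha pair2N => hR.
rewrite (pair2_coords _ R fan_basis) height_before_antipode (det2C (rho alpha.-1)).
by rewrite -gamma_det; lia.
Qed.

End Antipode.
End HalfPlane.

Theorem lemma3p1 (l : nat) (b : nat -> int) (rho : nat -> vec2) :
  is_tv l b rho -> b 0%N < 0 -> (2 < l)%N ->
  (exists alpha : nat, [/\ (1 < alpha)%N, (alpha < l)%N & rho alpha = vopp (rho 0%N)]) /\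
  (forall alpha : nat, (1 < alpha)%N -> (alpha < l)%N -> rho alpha = vopp (rho 0%N) ->
     [/\ 0 <= gamma_of b alpha,
         0 <= b 0%N + b alpha - gamma_of b alpha
       & forall R : vec2, pair2 (rho alpha) R = 1 ->
           pair2 (rho alpha.-1) R - pair2 (rho 1%N) R = gamma_of b alpha]).
Proof.
move=> tv hb0 hl; split; first exact: antipode_exists tv hl hb0.
move=> alpha ha1 hal ha; split.
- exact: (gamma_nonneg tv hl ha1 hal ha).
- exact: (gamma_bound tv hl ha1 hal ha).
- exact: (gamma_pairing tv hl ha1 hal ha).
Qed.
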